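(* Let $R_1,R_2,R_3$ be mutually orthogonal unit vectors in $\mathbb{R}^3$, $w_1,w_2,w_3\ge0$, $\nu_1,\nu_2,\nu_3$ Borel probability measures on $[-1,1]$, $\hat I=\sum_{i=1}^3w_iA_{R_i,\nu_i}$, and $E^0=\int d\hat I$, $E^1=\int\Omega\,d\hat I$, $E^2=\int\Omega\otimes\Omega\,d\hat I$. Let $\lambda_i=R_i^TE^2R_i$ and $F_i=E^1\cdot R_i$. Assume $\lambda_i>0$ for $i=1,2,3$ and \[ \frac{F_1^2}{\lambda_1}+\frac{F_2^2}{\lambda_2}+\frac{F_3^2}{\lambda_3}=E^0. \] Then at least one of the following holds: (1) there is $i$ with $\lambda_i=F_i^2/E^0$, and for the two other indices $j,k$ one has $\lambda_j=\lambda_k$ and $F_j=F_k=0$; (2) $|F_j|=\lambda_j$ for all $j=1,2,3$.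
   Context: For a unit vector $R\in\mathbb{R}^3$ and a finite Borel measure $\nu$ on $[-1,1]$, $A_{R,\nu}$ denotes the axisymmetric measure on the unit sphere $\mathbb{S}^2$ defined by $\int\varphi\,dA_{R,\nu}=\frac{1}{2\pi}\int_{-1}^1\int_0^{2\pi}\varphi\big(\mu R+\sqrt{1-\mu^2}(\cos\theta\,P+\sin\theta\,Q)\big)\,d\theta\,d\nu(\mu)$ for continuous $\varphi$, where $(P,Q,R)$ is any orthonormal basis. If $\nu$ has density $f$, then $A_{R,\nu}$ has density $\frac{1}{2\pi}f(\Omega\cdot R)$ with respect to surface measure. *)

From Stdlib Require Import Reals Lra ClassicalEpsilon.
Open Scope R_scope.

Definition sigma_algebra (S : (R -> Prop) -> Prop) : Prop :=
  S (fun _ => False) /\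
  (forall A, S A -> S (fun x => ~ A x)) /\
  (forall A : nat -> R -> Prop, (forall n, S (A n)) -> S (fun x => exists n, A n x)).

Definition borel (A : R -> Prop) : Prop :=
  forall S, sigma_algebra S -> (forall a b, S (fun x => a < x < b)) -> S A.

Record prob_meas_11 (nu : (R -> Prop) -> R) : Prop := {
  pm_nonneg : forall A, borel A -> 0 <= nu A;
  pm_ctbl_add : forall A : nat -> R -> Prop,
      (forall n, borel (A n)) ->
      (forall n m x, n <> m -> A n x -> A m x -> False) ->
      infinite_sum (fun n => nu (A n)) (nu (fun x => exists n, A n x));
  pm_support : nu (fun x => x < -1 \/ 1 < x) = 0;
  pm_total : nu (fun _ => True) = 1 }.

(* Riemann integral of f over [a,b] (when it exists; a fixed junk value otherwise) *)
Definition rint (f : R -> R) (a b : R) : R :=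
  epsilon (inhabits 0)
    (fun v => exists pr : Riemann_integrable f a b, RiemannInt pr = v).

(* Lebesgue integral of a bounded (Borel) function g against nu on [-1,1],
   via the layer-cake formula  int g dnu = int_0^M nu{g>t} dt - int_0^M nu{g<-t} dt
   for any bound M of |g| on [-1,1]. *)
Definition pm_int (nu : (R -> Prop) -> R) (g : R -> R) : R :=
  epsilon (inhabits 0)
    (fun v => exists M, 0 <= M /\ (forall x, -1 <= x <= 1 -> Rabs (g x) <= M) /\
       v = rint (fun t => nu (fun x => -1 <= x <= 1 /\ t < g x)) 0 M
         - rint (fun t => nu (fun x => -1 <= x <= 1 /\ g x < - t)) 0 M).

Definition vec3 := nat -> R.
Definition dot (u v : vec3) : R := u 0%nat * v 0%nat + u 1%nat * v 1%nat + u 2%nat * v 2%nat.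

(* ---------- axisymmetric measure A_{R,nu} as a functional on phi ----------
   (P,Q,R) must be an orthonormal basis. *)
Definition axisym_int (Rv P Q : vec3) (nu : (R -> Prop) -> R) (phi : vec3 -> R) : R :=
  pm_int nu (fun mu =>
    / (2 * PI) *
    rint (fun th => phi (fun k => mu * Rv k + sqrt (1 - mu ^ 2) * (cos th * P k + sin th * Q k)))
         0 (2 * PI)).

(* I-hat = w1 A_{R1,nu1} + w2 A_{R2,nu2} + w3 A_{R3,nu3}; for A_{R_i,nu_i} we use the
   orthonormal basis (R_{i+1}, R_{i+2}, R_i) (indices mod 3). *)
Definition Ihat (R1 R2 R3 : vec3) (w1 w2 w3 : R) (nu1 nu2 nu3 : (R -> Prop) -> R)
    (phi : vec3 -> R) : R :=
  w1 * axisym_int R1 R2 R3 nu1 phi + w2 * axisym_int R2 R3 R1 nu2 phi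
  + w3 * axisym_int R3 R1 R2 nu3 phi.

Definition mom0 (I : (vec3 -> R) -> R) : R := I (fun _ => 1).
Definition mom1 (I : (vec3 -> R) -> R) : vec3 := fun a => I (fun O => O a).
Definition mom2 (I : (vec3 -> R) -> R) : nat -> nat -> R :=
  fun a b => I (fun O => O a * O b).

Definition quadf (E : nat -> nat -> R) (v : vec3) : R :=
  sum_f_R0 (fun a => sum_f_R0 (fun b => v a * E a b * v b) 2) 2.

(* Write m_i and s_i for the first two moments of nu_i.  Averaging over the circles of
   A_{R_i,nu_i} gives E0 = sum w_i, F_i = w_i m_i and
   lambda_i = w_i s_i + sum_{j <> i} w_j (1 - s_j) / 2.  For any b the expression
   E0 - 2 sum b_i F_i + sum b_i^2 lambda_i equals sum_i w_i T_i with
   T_i = (1 - b_i m_i)^2 + b_i^2 (s_i - m_i^2) + (1 - s_i) (b_j^2 + b_k^2) / 2,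
   which is nonnegative because m_i^2 <= s_i <= 1.  At b_i = F_i / lambda_i the
   hypothesis makes the expression vanish, so every T_i with w_i > 0 vanishes:
   b_i m_i = 1, s_i = m_i^2, and s_i = 1 unless b_j = b_k = 0.  Either some beam
   forces the other two weights to vanish (alternative (1)), or every beam with
   positive weight has s_i = m_i^2 = 1, in which case lambda_i = w_i s_i > 0 forces
   all weights positive and |F_i| = w_i = lambda_i (alternative (2)).

   The measure-theoretic part: [pm_int] is the layer-cake integral, which for a
   bounded Borel g equals int_L^U nu{g > t} dt + L on any window [L, U] containing
   the range of g; from this it is affine in g and monotone, and the moments of
   [axisym_int] reduce to m_i and s_i by integrating trigonometric polynomials. *)

From Stdlib Require Import Reals Lra Lia ClassicalEpsilon FunctionalExtensionality PropExtensionality Classical.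
From Coquelicot Require Import Coquelicot.
Open Scope R_scope.

Definition nonincreasing (F : R -> R) : Prop := forall x y, x <= y -> F y <= F x.

Lemma ex_RInt_superlevel (F : R -> R) c a b : nonincreasing F -> a <= b ->
  ex_RInt (fun t => if Rle_dec c (F t) then 1 else 0) a b.
Proof.
  intros Hdec Hab.
  assert (Hcst : forall v u w, (forall x, u < x < w -> (if Rle_dec c (F x) then 1 else 0) = v) ->
      u <= w -> ex_RInt (fun t => if Rle_dec c (F t) then 1 else 0) u w).
  { intros v u w Hv Huw. apply ex_RInt_ext with (fun _ => v); [|apply ex_RInt_const].
    intros x Hx. rewrite Rmin_left, Rmax_right in Hx by lra. symmetry; auto. }
  destruct (classic (exists t, a <= t <= b /\ c <= F t)) as [Hex|Hno].
  - (* the superlevel set is an interval [a, tau) or [a, tau] *)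
    destruct (completeness (fun t => a <= t <= b /\ c <= F t)) as [tau [Hub Hlub]].
    { exists b; intros t Ht; lra. }
    { exact Hex. }
    assert (Ha : a <= tau) by (destruct Hex as [t Ht]; pose proof (Hub t Ht); lra).
    assert (Hb : tau <= b) by (apply Hlub; intros t Ht; lra).
    apply ex_RInt_Chasles_0 with tau; [lra| |].
    + apply (Hcst 1); [|lra]. intros x Hx.
      destruct (Rle_dec c (F x)) as [|Hn]; auto. exfalso.
      assert (exists s, a <= s <= b /\ c <= F s /\ x < s) as [s (Hs1 & Hs2 & Hs3)].
      { apply NNPP; intro Hne. assert (tau <= x); [|lra]. apply Hlub. intros s Hs.
        destruct (Rle_lt_dec s x); auto. exfalso; apply Hne; exists s; tauto. }
      apply Hn. specialize (Hdec x s ltac:(lra)). lra.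
    + apply (Hcst 0); [|lra]. intros x Hx.
      destruct (Rle_dec c (F x)) as [Hc|]; auto. exfalso.
      pose proof (Hub x ltac:(split; [lra|auto])). lra.
  - apply (Hcst 0); [|lra]. intros x Hx.
    destruct (Rle_dec c (F x)) as [Hc|]; auto. exfalso. apply Hno; exists x; split; [lra|auto].
Qed.

Fixpoint staircase (N : nat) (x : R) : R :=
  match N with O => 0 | S N' => staircase N' x + (if Rle_dec (INR N) x then 1 else 0) end.

Lemma staircase_S N x :
  staircase (S N) x = staircase N x + (if Rle_dec (INR N + 1) x then 1 else 0).
Proof. rewrite <- S_INR. reflexivity. Qed.

Lemma staircase_spec N x : 0 <= x ->
  staircase N x <= x /\ staircase N x <= INR N /\ (INR N <= x -> staircase N x = INR N) /\
  (x < INR N + 1 -> x - 1 < staircase N x).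
Proof.
  intro Hx. induction N as [|N IH]; [simpl; lra|].
  destruct IH as (H1 & H2 & H3 & H4). rewrite staircase_S, S_INR. pose proof (pos_INR N).
  destruct (Rle_dec (INR N + 1) x) as [Hle|Hlt].
  - rewrite H3 by lra. repeat split; intros; lra.
  - repeat split; intros; lra.
Qed.

Lemma ex_RInt_staircase (G : R -> R) N a b : nonincreasing G -> a <= b ->
  ex_RInt (fun t => staircase N (G t)) a b.
Proof.
  intros Hdec Hab. induction N as [|N IH].
  - apply (ex_RInt_const (V:=R_NormedModule)) with (v := 0).
  - apply ex_RInt_ext with
      (fun t => staircase N (G t) + (if Rle_dec (INR N + 1) (G t) then 1 else 0)).
    { intros; rewrite staircase_S; reflexivity. }
    apply (ex_RInt_plus (V := R_NormedModule)); auto. apply ex_RInt_superlevel; auto.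
Qed.

(* A nonincreasing [0,1]-valued function is the uniform limit of the staircases
   [staircase N (N F t) / N]. *)
Lemma ex_RInt_nonincreasing_01 (F : R -> R) a b : nonincreasing F -> (forall x, 0 <= F x <= 1) ->
  ex_RInt F a b.
Proof.
  intros Hdec H01.
  assert (Hle : forall a b, a <= b -> ex_RInt F a b).
  { clear a b. intros a b Hab.
    set (f := fun (N : nat) t => / INR N * staircase N (INR N * F t)).
    assert (Hf : forall N, is_RInt (f N) a b (RInt (f N) a b)).
    { intro N. apply (RInt_correct (V:=R_CompleteNormedModule)).
      apply (ex_RInt_scal (V := R_NormedModule)). apply ex_RInt_staircase; auto.
      intros x y Hxy. pose proof (pos_INR N). pose proof (Hdec x y Hxy). nra. }
    destruct (filterlim_RInt f a b eventually eventually_filter F (fun N => RInt (f N) a b) Hf)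
      as [If [_ HI]]; [|exists If; exact HI].
    intros P [eps HP]. destruct (archimed_cor1 eps (cond_pos eps)) as [N0 [HN0 HN0p]].
    exists N0. intros N HN. apply HP. intro t. change (Rabs (f N t - F t) < eps). unfold f.
    assert (HNp : 0 < INR N) by (apply lt_0_INR; lia).
    assert (/ INR N <= / INR N0) by (apply Rinv_le_contravar; [apply lt_0_INR; lia | apply le_INR; lia]).
    destruct (H01 t) as [Ht0 Ht1].
    destruct (staircase_spec N (INR N * F t)) as (B1 & _ & _ & B4); [nra|].
    specialize (B4 ltac:(nra)).
    assert (E1 : / INR N * staircase N (INR N * F t) <= F t).
    { apply Rmult_le_reg_l with (INR N); auto. rewrite <- Rmult_assoc, Rinv_r by lra. lra. }
    assert (E2 : F t - / INR N < / INR N * staircase N (INR N * F t)).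
    { apply Rmult_lt_reg_l with (INR N); auto. rewrite <- Rmult_assoc, Rinv_r by lra.
      rewrite Rmult_minus_distr_l, Rinv_r by lra. lra. }
    rewrite Rabs_left1 by lra. lra. }
  destruct (Rle_dec a b); auto. apply ex_RInt_swap. apply Hle; lra.
Qed.

Lemma set_ext (A B : R -> Prop) : (forall x, A x <-> B x) -> A = B.
Proof. intro H; apply functional_extensionality; intro x; apply propositional_extensionality, H. Qed.

Lemma borel_ext A B : (forall x, A x <-> B x) -> borel A -> borel B.
Proof. intro H; rewrite (set_ext A B H); auto. Qed.

Lemma borel_empty : borel (fun _ => False).
Proof. intros S [H _] _; exact H. Qed.

Lemma borel_compl A : borel A -> borel (fun x => ~ A x).
Proof. intros HA S HS Hi. destruct HS as (H0 & H1 & H2). apply H1, HA; [split|]; auto. Qed.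

Lemma borel_bigcup (A : nat -> R -> Prop) : (forall n, borel (A n)) -> borel (fun x => exists n, A n x).
Proof. intros HA S HS Hi. pose proof HS as (_ & _ & H2). apply H2; intro n; apply HA; auto. Qed.

Lemma borel_itv a b : borel (fun x => a < x < b).
Proof. intros S _ Hi; apply Hi. Qed.

Lemma borel_const (P : Prop) : borel (fun _ => P).
Proof.
  destruct (classic P) as [HP|HP].
  - apply borel_ext with (fun _ => ~ False); [tauto|]. apply borel_compl, borel_empty.
  - apply borel_ext with (fun _ => False); [tauto|]. apply borel_empty.
Qed.

Lemma borel_union A B : borel A -> borel B -> borel (fun x => A x \/ B x).
Proof.
  intros HA HB. apply borel_ext with (fun x => exists n, (match n with O => A | _ => B end) x).
  - intro x; split; [intros [[|n] H]; auto|]. intros [H|H]; [exists O|exists 1%nat]; auto.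
  - apply borel_bigcup; intros [|n]; auto.
Qed.

Lemma borel_inter A B : borel A -> borel B -> borel (fun x => A x /\ B x).
Proof.
  intros HA HB. apply borel_ext with (fun x => ~ (~ A x \/ ~ B x)); [intro; tauto|].
  apply borel_compl, borel_union; apply borel_compl; auto.
Qed.

Lemma borel_gt c : borel (fun x => c < x).
Proof.
  apply borel_ext with (fun x => exists n, c < x < c + INR n).
  - intro x; split; [intros [n H]; lra|]. intro H.
    destruct (INR_archimed 1 (x - c)) as [n Hn]; [lra|]. exists n; lra.
  - apply borel_bigcup; intro n; apply borel_itv.
Qed.

Lemma borel_lt c : borel (fun x => x < c).
Proof.
  apply borel_ext with (fun x => exists n, c - INR n < x < c).
  - intro x; split; [intros [n H]; lra|]. intro H.
    destruct (INR_archimed 1 (c - x)) as [n Hn]; [lra|]. exists n; lra.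
  - apply borel_bigcup; intro n; apply borel_itv.
Qed.

Lemma borel_ge c : borel (fun x => c <= x).
Proof. apply borel_ext with (fun x => ~ x < c); [intro; lra|]. apply borel_compl, borel_lt. Qed.

Lemma borel_le c : borel (fun x => x <= c).
Proof. apply borel_ext with (fun x => ~ c < x); [intro; lra|]. apply borel_compl, borel_gt. Qed.

Definition I11 (x : R) : Prop := -1 <= x <= 1.

Lemma borel_I11 : borel I11.
Proof. apply borel_inter; [apply borel_ge|apply borel_le]. Qed.

Section ProbabilityMeasure.
Variable nu : (R -> Prop) -> R.
Hypothesis Hnu : prob_meas_11 nu.

Lemma nu_ext (A B : R -> Prop) : (forall x, A x <-> B x) -> nu A = nu B.
Proof. intro H; rewrite (set_ext A B H); auto. Qed.

(* Countable additivity applied to the constant family [fun _ => set0] forces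
   [N * nu set0] to converge. *)
Lemma nu_empty : nu (fun _ => False) = 0.
Proof.
  pose proof (pm_ctbl_add _ Hnu (fun _ _ => False) (fun _ => borel_empty) ltac:(tauto)) as Hs.
  rewrite (nu_ext _ (fun _ => False)) in Hs by (intro x; split; [intros [n Hn]; auto | tauto]).
  set (c := nu (fun _ => False)) in *.
  destruct (Req_dec c 0) as [|Hc]; auto. exfalso.
  destruct (Hs (Rabs c)) as [N HN]; [apply Rabs_pos_lt; auto|].
  specialize (HN (N + 2)%nat ltac:(lia)). unfold R_dist in HN.
  assert (Hsum : forall n, sum_f_R0 (fun _ => c) n = (INR n + 1) * c).
  { induction n; simpl sum_f_R0; [simpl; ring|]. rewrite IHn, S_INR; ring. }
  rewrite Hsum in HN.
  replace ((INR (N + 2) + 1) * c - c) with (INR (N + 2) * c) in HN by ring.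
  rewrite Rabs_mult, Rabs_right, plus_INR in HN by (apply Rle_ge, pos_INR). simpl in HN.
  pose proof (pos_INR N). pose proof (Rabs_pos_lt c Hc). nra.
Qed.

Lemma nu_union A B : borel A -> borel B -> (forall x, A x -> B x -> False) ->
  nu (fun x => A x \/ B x) = nu A + nu B.
Proof.
  intros HA HB Hd.
  set (S := fun n : nat => match n with O => A | 1%nat => B | _ => fun _ : R => False end).
  assert (HS : forall n, borel (S n)) by (intros [|[|n]]; simpl; auto using borel_empty).
  assert (HD : forall n m x, n <> m -> S n x -> S m x -> False).
  { intros [|[|n]] [|[|m]] x Hnm; simpl; try tauto; intros; eapply Hd; eauto. }
  pose proof (pm_ctbl_add _ Hnu S HS HD) as Hs.
  rewrite (nu_ext (fun x => exists n, S n x) (fun x => A x \/ B x)) in Hs.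
  2:{ intro x; split; [intros [[|[|n]] Hn]; simpl in Hn; tauto|].
      intros [Hx|Hx]; [exists O|exists 1%nat]; auto. }
  apply (uniqueness_sum (fun n => nu (S n))); auto.
  intros eps Heps. exists 1%nat. intros n Hn. unfold R_dist.
  assert (E : sum_f_R0 (fun n => nu (S n)) n = nu A + nu B).
  { induction n; [lia|]. destruct n; [simpl; ring|].
    rewrite tech5, IHn by lia. simpl. rewrite nu_empty. ring. }
  rewrite E, Rminus_diag, Rabs_R0; auto.
Qed.

Lemma nu_mono A B : borel A -> borel B -> (forall x, A x -> B x) -> nu A <= nu B.
Proof.
  intros HA HB Hsub.
  assert (HBA : borel (fun x => B x /\ ~ A x)) by (apply borel_inter; auto; apply borel_compl; auto).
  rewrite (nu_ext B (fun x => A x \/ (B x /\ ~ A x))) by (intro x; specialize (Hsub x); tauto).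
  rewrite nu_union; auto; [|tauto]. pose proof (pm_nonneg _ Hnu _ HBA). lra.
Qed.

Lemma nu_le1 A : borel A -> nu A <= 1.
Proof. intro HA. rewrite <- (pm_total _ Hnu). apply nu_mono; auto using borel_const. Qed.

Lemma nu_I11 : nu I11 = 1.
Proof.
  pose proof (pm_total _ Hnu) as T.
  rewrite (nu_ext (fun _ => True) (fun x => I11 x \/ (x < -1 \/ 1 < x))) in T
    by (unfold I11; intro x; split; intros; auto; lra).
  rewrite nu_union, (pm_support _ Hnu) in T; auto using borel_I11; [lra| |].
  - apply borel_union; auto using borel_lt, borel_gt.
  - unfold I11; intros; lra.
Qed.

Lemma nu_I11_compl A : borel A -> nu (fun x => I11 x /\ A x) + nu (fun x => I11 x /\ ~ A x) = 1.
Proof.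
  intro HA. rewrite <- nu_union, <- nu_I11; try tauto.
  - apply nu_ext. intro x; split; [tauto|]. intro; destruct (classic (A x)); tauto.
  - apply borel_inter; auto using borel_I11.
  - apply borel_inter; auto using borel_I11, borel_compl.
Qed.

End ProbabilityMeasure.

Lemma ex_RInt_const_R (a b c : R) : ex_RInt (fun _ => c) a b.
Proof. apply (ex_RInt_const (V:=R_CompleteNormedModule)). Qed.

Lemma RInt_const_R (a b c : R) : RInt (fun _ => c) a b = (b - a) * c.
Proof. rewrite (RInt_const (V:=R_CompleteNormedModule)). reflexivity. Qed.

Lemma RInt_const_on (f : R -> R) a b c :
  (forall x, Rmin a b < x < Rmax a b -> f x = c) -> RInt f a b = (b - a) * c.
Proof. intro H. rewrite (RInt_ext (V:=R_CompleteNormedModule) f (fun _ => c)) by auto. apply RInt_const_R. Qed.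

Lemma RInt_Chasles_R (f : R -> R) a b c :
  ex_RInt f a b -> ex_RInt f b c -> RInt f a b + RInt f b c = RInt f a c.
Proof. intros H1 H2. rewrite <- (RInt_Chasles (V:=R_CompleteNormedModule) f a b c H1 H2). reflexivity. Qed.

Lemma RInt_swap_R (f : R -> R) a b : ex_RInt f a b -> RInt f b a = - RInt f a b.
Proof. intro H. rewrite <- (opp_RInt_swap (V:=R_CompleteNormedModule) f a b H). reflexivity. Qed.

Lemma RInt_minus_R (f g : R -> R) a b : ex_RInt f a b -> ex_RInt g a b ->
  RInt (fun t => f t - g t) a b = RInt f a b - RInt g a b.
Proof. intros H1 H2. exact (RInt_minus (V:=R_CompleteNormedModule) f g a b H1 H2). Qed.

Lemma ex_RInt_comp_lin_R (f : R -> R) u v a b : ex_RInt f (u * a + v) (u * b + v) ->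
  ex_RInt (fun t => f (u * t + v)) a b.
Proof.
  intro H. destruct (Req_dec u 0) as [->|Hu].
  - apply ex_RInt_ext with (fun _ => f v); [|apply ex_RInt_const_R].
    intros; rewrite Rmult_0_l, Rplus_0_l; reflexivity.
  - apply (ex_RInt_comp_lin (V:=R_CompleteNormedModule) f u v a b) in H.
    apply (ex_RInt_scal (V:=R_CompleteNormedModule)) with (k := / u) in H.
    eapply ex_RInt_ext; [|exact H]. intros x _.
    change (/ u * (u * f (u * x + v)) = f (u * x + v)). field; auto.
Qed.

Lemma RInt_comp_lin_R (f : R -> R) u v a b : ex_RInt f (u * a + v) (u * b + v) ->
  u * RInt (fun t => f (u * t + v)) a b = RInt f (u * a + v) (u * b + v).
Proof.
  intro H. rewrite <- (RInt_comp_lin (V:=R_CompleteNormedModule) f u v a b H).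
  rewrite <- (RInt_scal (V:=R_CompleteNormedModule)); [reflexivity|].
  apply ex_RInt_comp_lin_R; auto.
Qed.

Lemma rint_RInt f a b : ex_RInt f a b -> rint f a b = RInt f a b.
Proof.
  intro H. unfold rint.
  destruct (epsilon_spec (inhabits 0) (fun v => exists pr : Riemann_integrable f a b, RiemannInt pr = v))
    as [pr Hpr].
  - exists (RiemannInt (ex_RInt_Reals_0 f a b H)). exists (ex_RInt_Reals_0 f a b H). reflexivity.
  - rewrite <- Hpr. symmetry. apply RInt_Reals.
Qed.

Definition borel_fun (g : R -> R) : Prop :=
  forall t, borel (fun x => t < g x) /\ borel (fun x => g x < t).

Definition bounded_by (g : R -> R) (M : R) : Prop :=
  0 <= M /\ forall x, I11 x -> Rabs (g x) <= M.

Definition tail (nu : (R -> Prop) -> R) (g : R -> R) (t : R) : R := nu (fun x => I11 x /\ t < g x).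
Definition tail_ge (nu : (R -> Prop) -> R) (g : R -> R) (t : R) : R := nu (fun x => I11 x /\ t <= g x).

Definition layer_cake (nu : (R -> Prop) -> R) (g : R -> R) M : R :=
  rint (fun t => nu (fun x => -1 <= x <= 1 /\ t < g x)) 0 M
  - rint (fun t => nu (fun x => -1 <= x <= 1 /\ g x < - t)) 0 M.

Lemma Rabs_le_between a b : Rabs a <= b -> - b <= a <= b.
Proof. unfold Rabs; destruct (Rcase_abs a); lra. Qed.

Section LayerCake.
Variable nu : (R -> Prop) -> R.
Hypothesis Hnu : prob_meas_11 nu.
Variable g : R -> R.
Hypothesis Hg : borel_fun g.

Lemma borel_tail_set t : borel (fun x => I11 x /\ t < g x).
Proof. apply borel_inter; [apply borel_I11|apply Hg]. Qed.

Lemma borel_tail_ge_set t : borel (fun x => I11 x /\ t <= g x).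
Proof.
  apply borel_inter; [apply borel_I11|].
  apply borel_ext with (fun x => ~ g x < t); [intro; lra|]. apply borel_compl, Hg.
Qed.

Lemma ex_RInt_tail a b : ex_RInt (tail nu g) a b.
Proof.
  apply ex_RInt_nonincreasing_01.
  - intros x y Hxy. apply nu_mono; auto using borel_tail_set. intros z [Hz1 Hz2]; split; auto; lra.
  - intro t. split; [apply pm_nonneg|apply nu_le1]; auto using borel_tail_set.
Qed.

Lemma ex_RInt_tail_ge a b : ex_RInt (tail_ge nu g) a b.
Proof.
  apply ex_RInt_nonincreasing_01.
  - intros x y Hxy. apply nu_mono; auto using borel_tail_ge_set. intros z [Hz1 Hz2]; split; auto; lra.
  - intro t. split; [apply pm_nonneg|apply nu_le1]; auto using borel_tail_ge_set.
Qed.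

(* [tail t <= tail_ge t <= tail (t - d)] for every [d > 0]; shifting by [d] costs at most [2 d]. *)
Lemma RInt_tail_ge a b : a <= b -> RInt (tail_ge nu g) a b = RInt (tail nu g) a b.
Proof.
  intro Hab. apply Rle_antisym.
  2:{ apply RInt_le; auto using ex_RInt_tail, ex_RInt_tail_ge. intros.
      apply nu_mono; auto using borel_tail_set, borel_tail_ge_set. intros z [Hz1 Hz2]; split; auto; lra. }
  apply Rnot_lt_le; intro Hlt.
  set (d := (RInt (tail_ge nu g) a b - RInt (tail nu g) a b) / 2).
  assert (Hd : 0 < d) by (unfold d; lra).
  assert (E1 : RInt (tail_ge nu g) a b <= RInt (fun u => tail nu g (1 * u + - d)) a b).
  { apply RInt_le; auto using ex_RInt_tail_ge.
    - apply ex_RInt_comp_lin_R, ex_RInt_tail.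
    - intros x _. apply nu_mono; auto using borel_tail_set, borel_tail_ge_set.
      intros z [Hz1 Hz2]; split; auto; lra. }
  rewrite <- (Rmult_1_l (RInt (fun u => tail nu g (1 * u + - d)) a b)) in E1.
  rewrite RInt_comp_lin_R in E1 by apply ex_RInt_tail.
  rewrite <- (RInt_Chasles_R _ (1 * a + - d) a) in E1 by apply ex_RInt_tail.
  pose proof (RInt_Chasles_R (tail nu g) a (1 * b + - d) b (ex_RInt_tail _ _) (ex_RInt_tail _ _)).
  assert (E3 : RInt (tail nu g) (1 * a + - d) a <= RInt (fun _ => 1) (1 * a + - d) a).
  { apply RInt_le; [lra|apply ex_RInt_tail|apply ex_RInt_const_R|].
    intros; apply nu_le1; auto using borel_tail_set. }
  assert (E4 : RInt (fun _ => 0) (1 * b + - d) b <= RInt (tail nu g) (1 * b + - d) b).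
  { apply RInt_le; [lra|apply ex_RInt_const_R|apply ex_RInt_tail|].
    intros; apply pm_nonneg; auto using borel_tail_set. }
  rewrite RInt_const_R in E3, E4. unfold d in *. lra.
Qed.

Lemma layer_cake_tail M : bounded_by g M -> layer_cake nu g M = RInt (tail nu g) (-M) M - M.
Proof.
  intros [HM _]. unfold layer_cake.
  change (fun t => nu (fun x => -1 <= x <= 1 /\ t < g x)) with (tail nu g).
  assert (Hlow : (fun t => nu (fun x => -1 <= x <= 1 /\ g x < - t))
                 = (fun t => 1 - tail_ge nu g (-1 * t + 0))).
  { apply functional_extensionality; intro t.
    assert (HB : borel (fun x => - t <= g x)).
    { apply borel_ext with (fun x => ~ g x < - t); [intro; lra|]. apply borel_compl, Hg. }
    pose proof (nu_I11_compl nu Hnu _ HB) as S; cbv beta in S.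
    rewrite (nu_ext nu (fun x => I11 x /\ ~ - t <= g x) (fun x => -1 <= x <= 1 /\ g x < - t)) in S
      by (intro x; unfold I11; split; intros [h1 h2]; split; auto; lra).
    unfold tail_ge. replace (-1 * t + 0) with (- t) by ring. lra. }
  assert (Hex : ex_RInt (fun t => tail_ge nu g (-1 * t + 0)) 0 M)
    by apply ex_RInt_comp_lin_R, ex_RInt_tail_ge.
  rewrite Hlow, !rint_RInt, RInt_minus_R, RInt_const_R; auto using ex_RInt_tail, ex_RInt_const_R.
  2:{ apply (ex_RInt_minus (V:=R_CompleteNormedModule)); auto using ex_RInt_const_R. }
  pose proof (RInt_comp_lin_R (tail_ge nu g) (-1) 0 0 M (ex_RInt_tail_ge _ _)) as L.
  replace (-1 * 0 + 0) with 0 in L by ring. replace (-1 * M + 0) with (- M) in L by ring.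
  rewrite (RInt_swap_R (tail_ge nu g) (-M) 0), RInt_tail_ge in L by (auto using ex_RInt_tail_ge; lra).
  rewrite <- (RInt_Chasles_R _ (-M) 0 M) by apply ex_RInt_tail. lra.
Qed.

Lemma tail_below M t : bounded_by g M -> t < - M -> tail nu g t = 1.
Proof.
  intros [_ Hb] Ht. unfold tail. rewrite <- (nu_I11 nu Hnu). apply nu_ext.
  intro x; split; [tauto|]. intro Hx; split; auto. pose proof (Rabs_le_between _ _ (Hb x Hx)). lra.
Qed.

Lemma tail_above M t : bounded_by g M -> M <= t -> tail nu g t = 0.
Proof.
  intros [_ Hb] Ht. unfold tail. rewrite <- (nu_empty nu Hnu). apply nu_ext.
  intro x; split; [|tauto]. intros [Hx Hx2]. pose proof (Rabs_le_between _ _ (Hb x Hx)). lra.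
Qed.

Lemma RInt_tail_window M L U : bounded_by g M -> L <= - M -> M <= U ->
  RInt (tail nu g) L U + L = RInt (tail nu g) (-M) M - M.
Proof.
  intros Hb HL HU. pose proof (proj1 Hb).
  rewrite <- (RInt_Chasles_R _ L (-M) U), <- (RInt_Chasles_R _ (-M) M U) by apply ex_RInt_tail.
  rewrite (RInt_const_on _ L (-M) 1), (RInt_const_on _ M U 0); [lra| |];
    intros x Hx; rewrite Rmin_left, Rmax_right in Hx by lra.
  - apply (tail_above M); auto; lra.
  - apply (tail_below M); auto; lra.
Qed.

Lemma pm_int_tail M L U : bounded_by g M -> L <= - M -> M <= U ->
  pm_int nu g = RInt (tail nu g) L U + L.
Proof.
  intros Hb HL HU.
  change (epsilon (inhabits 0) (fun v => exists M, 0 <= M /\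
    (forall x, -1 <= x <= 1 -> Rabs (g x) <= M) /\ v = layer_cake nu g M) = RInt (tail nu g) L U + L).
  destruct (epsilon_spec (inhabits 0) (fun v => exists M, 0 <= M /\
      (forall x, -1 <= x <= 1 -> Rabs (g x) <= M) /\ v = layer_cake nu g M)) as [M' [HM' [Hb' ->]]].
  { exists (layer_cake nu g M), M. destruct Hb. repeat split; auto. }
  assert (Hmin : bounded_by g (Rmin M M')).
  { destruct Hb as [h1 h2]. split; [apply Rmin_glb; auto|]. intros x Hx. apply Rmin_glb; auto. }
  pose proof (Rmin_l M M'). pose proof (Rmin_r M M').
  rewrite layer_cake_tail by (split; auto).
  rewrite (RInt_tail_window (Rmin M M') L U) by (auto; lra).
  rewrite <- (RInt_tail_window (Rmin M M') (-M') M') by (auto; lra). ring.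
Qed.

Lemma layer_cake_pm_int M : bounded_by g M -> layer_cake nu g M = pm_int nu g.
Proof.
  intro Hb. rewrite layer_cake_tail, (pm_int_tail M (-M) M); auto; lra.
Qed.

End LayerCake.

Lemma borel_fun_const c : borel_fun (fun _ => c).
Proof. intro t; split; apply borel_const. Qed.

Lemma borel_fun_affine g a b : borel_fun g -> borel_fun (fun x => a * g x + b).
Proof.
  intros Hg t. set (s := (t - b) / a).
  destruct (Rtotal_order a 0) as [Ha|[->|Ha]].
  - assert (Hs : a * s = t - b) by (unfold s; field; lra).
    split; [apply borel_ext with (fun x => g x < s) | apply borel_ext with (fun x => s < g x)];
      try apply Hg; intro x; split; intro; nra.
  - split; [apply borel_ext with (fun _ => t < b) | apply borel_ext with (fun _ => b < t)];
      try apply borel_const; intro; lra.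
  - assert (Hs : a * s = t - b) by (unfold s; field; lra).
    split; [apply borel_ext with (fun x => s < g x) | apply borel_ext with (fun x => g x < s)];
      try apply Hg; intro x; split; intro; nra.
Qed.

Lemma bounded_by_affine g a b M : bounded_by g M -> bounded_by (fun x => a * g x + b) (Rabs a * M + Rabs b).
Proof.
  intros [HM Hb]. pose proof (Rabs_pos a). pose proof (Rabs_pos b). split; [nra|].
  intros x Hx. eapply Rle_trans; [apply Rabs_triang|]. rewrite Rabs_mult.
  apply Rplus_le_compat_r, Rmult_le_compat_l; auto.
Qed.

Section Integral.
Variable nu : (R -> Prop) -> R.
Hypothesis Hnu : prob_meas_11 nu.

Lemma pm_int_ext g h : (forall x, I11 x -> g x = h x) -> pm_int nu g = pm_int nu h.
Proof.
  intro E. unfold pm_int. f_equal.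
  apply functional_extensionality; intro v. apply propositional_extensionality.
  assert (Eset : forall P : R -> R -> Prop, (forall t y, P t y \/ ~ P t y) ->
    (fun t => nu (fun x => -1 <= x <= 1 /\ P t (g x))) = (fun t => nu (fun x => -1 <= x <= 1 /\ P t (h x)))).
  { intros P _. apply functional_extensionality; intro t. apply nu_ext.
    intro x; split; intros [Hx HP]; split; auto; [rewrite <- E | rewrite E]; auto. }
  rewrite (Eset (fun t y => t < y)), (Eset (fun t y => y < - t)) by (intros; apply classic).
  split; intros [M [HM [Hb Hv]]]; exists M; repeat split; auto; intros x Hx;
    [rewrite <- E | rewrite E]; auto.
Qed.

Lemma pm_int_const c : pm_int nu (fun _ => c) = c.
Proof.
  assert (Hb : bounded_by (fun _ => c) (Rabs c)) by (split; [apply Rabs_pos | intros; lra]).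
  pose proof (Rabs_le_between c (Rabs c) (Rle_refl _)).
  rewrite (pm_int_tail nu Hnu _ (borel_fun_const c) (Rabs c) (-(Rabs c + 1)) (Rabs c + 1)) by (auto; lra).
  rewrite <- (RInt_Chasles_R _ (-(Rabs c + 1)) c (Rabs c + 1)) by (apply ex_RInt_tail; auto using borel_fun_const).
  rewrite (RInt_const_on _ (-(Rabs c + 1)) c 1), (RInt_const_on _ c (Rabs c + 1) 0); [lra| |];
    intros x Hx; rewrite Rmin_left, Rmax_right in Hx by lra; unfold tail.
  - rewrite <- (nu_empty nu Hnu). apply nu_ext. intro y; split; intros; [lra|tauto].
  - rewrite <- (nu_I11 nu Hnu). apply nu_ext. intro y; split; intros; [tauto|split; auto; lra].
Qed.

(* The definition of [pm_int] is symmetric under [g |-> - g]. *)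
Lemma pm_int_opp g M : borel_fun g -> bounded_by g M -> pm_int nu (fun x => - g x) = - pm_int nu g.
Proof.
  intros Hg Hb.
  assert (Hsym : forall M, layer_cake nu (fun x => - g x) M = - layer_cake nu g M).
  { intro M'. unfold layer_cake.
    assert (E1 : (fun t => nu (fun x => -1 <= x <= 1 /\ t < - g x))
                 = (fun t => nu (fun x => -1 <= x <= 1 /\ g x < - t)))
      by (apply functional_extensionality; intro t; apply nu_ext; intro; lra).
    assert (E2 : (fun t => nu (fun x => -1 <= x <= 1 /\ - g x < - t))
                 = (fun t => nu (fun x => -1 <= x <= 1 /\ t < g x)))
      by (apply functional_extensionality; intro t; apply nu_ext; intro; lra).
    rewrite E1, E2. ring. }
  change (epsilon (inhabits 0) (fun v => exists M, 0 <= M /\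
    (forall x, -1 <= x <= 1 -> Rabs (- g x) <= M) /\ v = layer_cake nu (fun x => - g x) M) = - pm_int nu g).
  destruct (epsilon_spec (inhabits 0) (fun v => exists M, 0 <= M /\
      (forall x, -1 <= x <= 1 -> Rabs (- g x) <= M) /\ v = layer_cake nu (fun x => - g x) M))
    as [M' [HM' [Hb' ->]]].
  { destruct Hb as [HM Hb]. exists (layer_cake nu (fun x => - g x) M), M.
    repeat split; auto. intros x Hx. rewrite Rabs_Ropp. auto. }
  rewrite Hsym, (layer_cake_pm_int nu Hnu g Hg M'); auto.
  split; auto. intros x Hx. rewrite <- Rabs_Ropp. auto.
Qed.

Lemma pm_int_scale_pos g a b M : borel_fun g -> bounded_by g M -> 0 < a ->
  pm_int nu (fun x => a * g x + b) = a * pm_int nu g + b.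
Proof.
  intros Hg Hb Ha. destruct Hb as [HM0 Hb0].
  set (K := a * M + Rabs b).
  pose proof (Rabs_le_between b (Rabs b) (Rle_refl _)).
  assert (HK : bounded_by (fun x => a * g x + b) K).
  { unfold K. rewrite <- (Rabs_right a) at 1 by lra. apply bounded_by_affine. split; auto. }
  rewrite (pm_int_tail nu Hnu _ (borel_fun_affine g a b Hg) K (-K) K) by (auto; lra).
  assert (Etail : tail nu (fun x => a * g x + b) = fun t => tail nu g (/ a * t + - b / a)).
  { apply functional_extensionality; intro t. unfold tail. apply nu_ext. intro x.
    assert (E : a * (/ a * t + - b / a) = t - b) by (field; lra). split; intros [Hx Ht]; split; auto; nra. }
  pose proof (RInt_comp_lin_R (tail nu g) (/ a) (- b / a) (- K) K (ex_RInt_tail nu Hnu g Hg _ _)) as L.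
  rewrite (pm_int_tail nu Hnu g Hg M (/ a * - K + - b / a) (/ a * K + - b / a)).
  - rewrite Etail. apply (Rmult_eq_compat_l a) in L.
    rewrite <- Rmult_assoc, Rinv_r, Rmult_1_l in L by lra. rewrite L. field. lra.
  - split; auto.
  - apply Rmult_le_reg_l with a; auto.
    replace (a * (/ a * - K + - b / a)) with (- K - b) by (field; lra). unfold K; nra.
  - apply Rmult_le_reg_l with a; auto.
    replace (a * (/ a * K + - b / a)) with (K - b) by (field; lra). unfold K; nra.
Qed.

Lemma pm_int_affine g a b M : borel_fun g -> bounded_by g M ->
  pm_int nu (fun x => a * g x + b) = a * pm_int nu g + b.
Proof.
  intros Hg Hb. destruct (Rtotal_order a 0) as [Ha|[->|Ha]].
  - rewrite (pm_int_ext _ (fun x => - ((- a) * g x + - b))) by (intros; ring).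
    rewrite (pm_int_opp _ (Rabs (- a) * M + Rabs (- b))) by auto using borel_fun_affine, bounded_by_affine.
    rewrite (pm_int_scale_pos g (- a) (- b) M) by (auto; lra). ring.
  - rewrite (pm_int_ext _ (fun _ => b)) by (intros; ring). rewrite pm_int_const. ring.
  - apply pm_int_scale_pos with M; auto.
Qed.

Lemma pm_int_le g h Mg Mh : borel_fun g -> borel_fun h -> bounded_by g Mg -> bounded_by h Mh ->
  (forall x, I11 x -> g x <= h x) -> pm_int nu g <= pm_int nu h.
Proof.
  intros Hg Hh Hbg Hbh Hle. pose proof (proj1 Hbg). pose proof (proj1 Hbh).
  rewrite (pm_int_tail nu Hnu g Hg Mg (-(Mg + Mh)) (Mg + Mh)) by (auto; lra).
  rewrite (pm_int_tail nu Hnu h Hh Mh (-(Mg + Mh)) (Mg + Mh)) by (auto; lra).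
  apply Rplus_le_compat_r, RInt_le; auto using ex_RInt_tail; [lra|].
  intros t _. apply nu_mono; auto using borel_tail_set.
  intros x [Hx Ht]. split; auto. specialize (Hle x Hx). lra.
Qed.

End Integral.

Lemma rint_trig_quadratic (f : R -> R) A B C D E F :
  (forall th, f th = A + B * cos th + C * sin th + D * (cos th * cos th) + E * (sin th * sin th)
                     + F * (cos th * sin th)) ->
  rint f 0 (2 * PI) = 2 * PI * A + PI * (D + E).
Proof.
  intro Hf. rewrite (functional_extensionality f _ Hf).
  set (G := fun t => A * t + B * sin t - C * cos t + D * ((t + sin t * cos t) / 2)
                     + E * ((t - sin t * cos t) / 2) + F * (sin t * sin t / 2)).
  assert (H : is_RInt (fun th => A + B * cos th + C * sin th + D * (cos th * cos th)
                 + E * (sin th * sin th) + F * (cos th * sin th)) 0 (2 * PI) (minus (G (2 * PI)) (G 0))).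
  { apply (is_RInt_derive (V:=R_CompleteNormedModule)).
    - intros x _. unfold G. auto_derive; auto.
      assert (Hs : sin x * sin x = 1 - cos x * cos x) by (pose proof (sin2_cos2 x); unfold Rsqr in *; lra).
      replace (sin x * (1 * - sin x)) with (- (1 - cos x * cos x)) by (rewrite <- Hs; ring).
      rewrite Hs. field.
    - intros x _. apply (ex_derive_continuous (K:=R_AbsRing) (V:=R_NormedModule)). auto_derive; auto. }
  rewrite rint_RInt by (eexists; exact H). rewrite (is_RInt_unique _ _ _ _ H).
  unfold G, minus, plus, opp; simpl. rewrite sin_2PI, cos_2PI, sin_0, cos_0. field.
Qed.

Lemma borel_fun_id : borel_fun (fun x => x).
Proof. intro t; split; [apply borel_gt|apply borel_lt]. Qed.

Lemma borel_fun_sq : borel_fun (fun x => x * x).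
Proof.
  intro t. destruct (Rle_dec 0 t) as [Ht|Ht].
  - set (r := sqrt t). assert (Hr : r * r = t) by (apply sqrt_sqrt; lra).
    assert (Hr0 : 0 <= r) by apply sqrt_pos.
    split.
    + apply borel_ext with (fun x => ~ (-r <= x /\ x <= r)).
      * intro x; split; [|intros h [h1 h2]; nra]. intro h.
        destruct (Rle_dec (- r) x), (Rle_dec x r); [tauto|nra|nra|nra].
      * apply borel_compl, borel_inter; [apply borel_ge|apply borel_le].
    + apply borel_ext with (fun x => -r < x < r); [|apply borel_itv].
      intro x; split; intro h; [nra|]. split; apply Rnot_le_lt; intro; nra.
  - split; [apply borel_ext with (fun _ => True) | apply borel_ext with (fun _ => False)];
      try apply borel_const; intro x; split; intros; auto; nra.
Qed.

Lemma bounded_by_id : bounded_by (fun x => x) 1.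
Proof. split; [lra|]. intros x Hx. unfold I11 in Hx. apply Rabs_le; lra. Qed.

Lemma bounded_by_sq : bounded_by (fun x => x * x) 1.
Proof. split; [lra|]. intros x Hx. unfold I11 in Hx. apply Rabs_le; nra. Qed.

Definition mean nu := pm_int nu (fun x => x).
Definition second_moment nu := pm_int nu (fun x => x * x).

Section Moments.
Variable nu : (R -> Prop) -> R.
Hypothesis Hnu : prob_meas_11 nu.

Lemma pm_int_affine_id a b : pm_int nu (fun x => a * x + b) = a * mean nu + b.
Proof. exact (pm_int_affine nu Hnu (fun x => x) a b 1 borel_fun_id bounded_by_id). Qed.

Lemma pm_int_affine_sq a b : pm_int nu (fun x => a * (x * x) + b) = a * second_moment nu + b.
Proof. exact (pm_int_affine nu Hnu (fun x => x * x) a b 1 borel_fun_sq bounded_by_sq). Qed.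

Lemma second_moment_le1 : second_moment nu <= 1.
Proof.
  rewrite <- (pm_int_const nu Hnu 1).
  apply (pm_int_le nu Hnu _ _ 1 1); auto using borel_fun_sq, bounded_by_sq, borel_fun_const.
  - split; [lra|]. intros. rewrite Rabs_R1. lra.
  - intros x Hx; unfold I11 in Hx; nra.
Qed.

(* [m^2 = int (2 m x - m^2) dnu <= int x^2 dnu], since [(x - m)^2 >= 0]. *)
Lemma mean_sq_le_second_moment : mean nu * mean nu <= second_moment nu.
Proof.
  set (m := mean nu).
  assert (E : pm_int nu (fun x => (2 * m) * x + - (m * m)) = m * m)
    by (rewrite pm_int_affine_id; unfold m; ring).
  rewrite <- E.
  apply (pm_int_le nu Hnu _ _ (Rabs (2 * m) * 1 + Rabs (- (m * m))) 1);
    auto using borel_fun_affine, bounded_by_affine, borel_fun_id, bounded_by_id, borel_fun_sq, bounded_by_sq.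
  intros x _. pose proof (Rle_0_sqr (x - m)) as Hq. unfold Rsqr in Hq. lra.
Qed.

Lemma axisym_int_one Rv P Q : axisym_int Rv P Q nu (fun _ => 1) = 1.
Proof.
  unfold axisym_int. rewrite (pm_int_ext nu _ (fun _ => 1)); [apply pm_int_const; auto|].
  intros x _. rewrite (rint_trig_quadratic _ 1 0 0 0 0 0) by (intro; ring).
  field. apply PI_neq0.
Qed.

Lemma axisym_int_coord Rv P Q a : axisym_int Rv P Q nu (fun O => O a) = Rv a * mean nu.
Proof.
  unfold axisym_int. rewrite (pm_int_ext nu _ (fun x => Rv a * x + 0)).
  { rewrite pm_int_affine_id; ring. }
  intros x _. set (r := sqrt (1 - x ^ 2)).
  rewrite (rint_trig_quadratic _ (x * Rv a) (r * P a) (r * Q a) 0 0 0) by (intro; ring).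
  field. apply PI_neq0.
Qed.

(* The circle average of [O_a O_b] is [x^2 Rv_a Rv_b + (1 - x^2) (P_a P_b + Q_a Q_b) / 2]. *)
Lemma axisym_int_coord_mul Rv P Q a b : axisym_int Rv P Q nu (fun O => O a * O b) =
  (Rv a * Rv b - (P a * P b + Q a * Q b) / 2) * second_moment nu + (P a * P b + Q a * Q b) / 2.
Proof.
  unfold axisym_int.
  rewrite (pm_int_ext nu _ (fun x => (Rv a * Rv b - (P a * P b + Q a * Q b) / 2) * (x * x)
                                     + (P a * P b + Q a * Q b) / 2)).
  { apply pm_int_affine_sq. }
  intros x Hx. set (r := sqrt (1 - x ^ 2)).
  assert (Hr : r * r = 1 - x * x) by (unfold r; rewrite sqrt_sqrt; [ring|unfold I11 in Hx; nra]).
  rewrite (rint_trig_quadratic _ (x * x * Rv a * Rv b) (x * r * (Rv a * P b + P a * Rv b))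
     (x * r * (Rv a * Q b + Q a * Rv b)) (r * r * P a * P b) (r * r * Q a * Q b)
     (r * r * (P a * Q b + Q a * P b))) by (intro; ring).
  rewrite Hr. field. apply PI_neq0.
Qed.

End Moments.

Definition deficit (m s b c d : R) : R :=
  (1 - b * m) ^ 2 + b ^ 2 * (s - m * m) + (1 - s) * (c ^ 2 + d ^ 2) / 2.

Lemma deficit_nonneg m s b c d : m * m <= s -> s <= 1 -> 0 <= deficit m s b c d.
Proof.
  intros Hm Hs. unfold deficit.
  pose proof (pow2_ge_0 b). pose proof (pow2_ge_0 c). pose proof (pow2_ge_0 d).
  pose proof (pow2_ge_0 (1 - b * m)). nra.
Qed.

Lemma weighted_deficit_eq0 w m s b c d : 0 <= w -> m * m <= s -> s <= 1 ->
  w * deficit m s b c d = 0 ->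
  w = 0 \/ 0 < w /\ b * m = 1 /\ s = m * m /\ (s = 1 \/ c = 0 /\ d = 0).
Proof.
  intros Hw Hm Hs H. destruct (Rle_lt_or_eq_dec 0 w Hw) as [Hw'|]; [right|left; auto].
  assert (Hd : deficit m s b c d = 0) by (apply Rmult_integral in H; destruct H; auto; lra).
  unfold deficit in Hd.
  pose proof (pow2_ge_0 b). pose proof (pow2_ge_0 c). pose proof (pow2_ge_0 d).
  pose proof (pow2_ge_0 (1 - b * m)).
  assert (P1 : (1 - b * m) ^ 2 = 0) by nra.
  assert (P2 : b ^ 2 * (s - m * m) = 0) by nra.
  assert (P3 : (1 - s) * (c ^ 2 + d ^ 2) = 0) by nra.
  assert (Hbm : b * m = 1) by nra.
  assert (b ^ 2 <> 0) by (apply pow_nonzero; intro; subst; lra).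
  repeat split; auto.
  - apply Rmult_integral in P2. destruct P2; [contradiction|lra].
  - apply Rmult_integral in P3. destruct P3; [left; lra|right; split; nra].
Qed.

(* The weighted deficits expand to a quadratic in [b] minimised at [b_i = F_i / l_i]. *)
Lemma weighted_deficit_expansion w1 w2 w3 m1 m2 m3 s1 s2 s3 b1 b2 b3 :
  w1 * deficit m1 s1 b1 b2 b3 + w2 * deficit m2 s2 b2 b3 b1 + w3 * deficit m3 s3 b3 b1 b2
  = (w1 + w2 + w3) - 2 * (b1 * (w1 * m1) + b2 * (w2 * m2) + b3 * (w3 * m3))
    + b1 ^ 2 * (w1 * s1 + w2 * (1 - s2) / 2 + w3 * (1 - s3) / 2)
    + b2 ^ 2 * (w2 * s2 + w1 * (1 - s1) / 2 + w3 * (1 - s3) / 2)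
    + b3 ^ 2 * (w3 * s3 + w1 * (1 - s1) / 2 + w2 * (1 - s2) / 2).
Proof. unfold deficit. field. Qed.

Lemma single_beam_case w1 w2 w3 m1 m2 m3 s1 s2 s3 l1 l2 l3 F1 F2 F3 E0 :
  0 < w1 -> w2 = 0 -> w3 = 0 -> s1 = m1 * m1 ->
  l1 = w1 * s1 + w2 * (1 - s2) / 2 + w3 * (1 - s3) / 2 ->
  l2 = w2 * s2 + w1 * (1 - s1) / 2 + w3 * (1 - s3) / 2 ->
  l3 = w3 * s3 + w1 * (1 - s1) / 2 + w2 * (1 - s2) / 2 ->
  F1 = w1 * m1 -> F2 = w2 * m2 -> F3 = w3 * m3 -> E0 = w1 + w2 + w3 ->
  l1 = F1 ^ 2 / E0 /\ l2 = l3 /\ F2 = 0 /\ F3 = 0.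
Proof. intros Hw1 -> -> -> -> -> -> -> -> -> ->. repeat split; field; lra. Qed.

Lemma Rabs_saturated_beam w m s : 0 <= w -> (w = 0 \/ s = 1 /\ m * m = 1) -> 0 < w * s ->
  Rabs (w * m) = w * s.
Proof.
  intros Hw [->|[-> Hm]] Hpos; [lra|].
  assert (Hm' : Rabs m * Rabs m = 1) by (rewrite <- Rabs_mult, Hm; apply Rabs_R1).
  assert (Rabs m = 1) by (pose proof (Rabs_pos m); nra).
  rewrite Rabs_mult, (Rabs_right w) by lra. nra.
Qed.

Lemma beam_moment_cases w1 w2 w3 m1 m2 m3 s1 s2 s3 l1 l2 l3 F1 F2 F3 E0 :
  0 <= w1 -> 0 <= w2 -> 0 <= w3 ->
  m1 * m1 <= s1 -> s1 <= 1 -> m2 * m2 <= s2 -> s2 <= 1 -> m3 * m3 <= s3 -> s3 <= 1 ->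
  l1 = w1 * s1 + w2 * (1 - s2) / 2 + w3 * (1 - s3) / 2 ->
  l2 = w2 * s2 + w1 * (1 - s1) / 2 + w3 * (1 - s3) / 2 ->
  l3 = w3 * s3 + w1 * (1 - s1) / 2 + w2 * (1 - s2) / 2 ->
  F1 = w1 * m1 -> F2 = w2 * m2 -> F3 = w3 * m3 -> E0 = w1 + w2 + w3 ->
  0 < l1 -> 0 < l2 -> 0 < l3 ->
  F1 ^ 2 / l1 + F2 ^ 2 / l2 + F3 ^ 2 / l3 = E0 ->
  ((l1 = F1 ^ 2 / E0 /\ l2 = l3 /\ F2 = 0 /\ F3 = 0) \/
   (l2 = F2 ^ 2 / E0 /\ l1 = l3 /\ F1 = 0 /\ F3 = 0) \/
   (l3 = F3 ^ 2 / E0 /\ l1 = l2 /\ F1 = 0 /\ F2 = 0)) \/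
  (Rabs F1 = l1 /\ Rabs F2 = l2 /\ Rabs F3 = l3).
Proof.
  intros Hw1 Hw2 Hw3 Hm1 Hs1 Hm2 Hs2 Hm3 Hs3 El1 El2 El3 EF1 EF2 EF3 EE0 Hl1 Hl2 Hl3 Heq.
  set (b1 := F1 / l1). set (b2 := F2 / l2). set (b3 := F3 / l3).
  pose proof (deficit_nonneg m1 s1 b1 b2 b3 Hm1 Hs1).
  pose proof (deficit_nonneg m2 s2 b2 b3 b1 Hm2 Hs2).
  pose proof (deficit_nonneg m3 s3 b3 b1 b2 Hm3 Hs3).
  assert (Hsum : w1 * deficit m1 s1 b1 b2 b3 + w2 * deficit m2 s2 b2 b3 b1
                 + w3 * deficit m3 s3 b3 b1 b2 = 0).
  { rewrite weighted_deficit_expansion, <- El1, <- El2, <- El3, <- EF1, <- EF2, <- EF3, <- EE0, <- Heq.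
    unfold b1, b2, b3. field. lra. }
  assert (Z1 : w1 * deficit m1 s1 b1 b2 b3 = 0) by nra.
  assert (Z2 : w2 * deficit m2 s2 b2 b3 b1 = 0) by nra.
  assert (Z3 : w3 * deficit m3 s3 b3 b1 b2 = 0) by nra.
  pose proof (weighted_deficit_eq0 _ _ _ _ _ _ Hw1 Hm1 Hs1 Z1) as C1.
  pose proof (weighted_deficit_eq0 _ _ _ _ _ _ Hw2 Hm2 Hs2 Z2) as C2.
  pose proof (weighted_deficit_eq0 _ _ _ _ _ _ Hw3 Hm3 Hs3 Z3) as C3.
  assert (Hoff : forall w b m (P Q : Prop), w = 0 \/ 0 < w /\ b * m = 1 /\ P /\ Q -> b = 0 -> w = 0)
    by (intros w b m P Q [|(_ & Hbm & _)] ->; lra).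
  destruct (classic (0 < w1 /\ s1 = m1 * m1 /\ b2 = 0 /\ b3 = 0)) as [(P1 & S1 & B2 & B3)|K1].
  { left; left. apply (single_beam_case w1 w2 w3 m1 m2 m3 s1 s2 s3); eauto. }
  destruct (classic (0 < w2 /\ s2 = m2 * m2 /\ b3 = 0 /\ b1 = 0)) as [(P2 & S2 & B3 & B1)|K2].
  { left; right; left.
    apply (single_beam_case w2 w1 w3 m2 m1 m3 s2 s1 s3); eauto; lra. }
  destruct (classic (0 < w3 /\ s3 = m3 * m3 /\ b1 = 0 /\ b2 = 0)) as [(P3 & S3 & B1 & B2)|K3].
  { left; right; right.
    apply (single_beam_case w3 w1 w2 m3 m1 m2 s3 s1 s2); eauto; lra. }
  assert (Hsat : forall w b m s (c d : R), ~ (0 < w /\ s = m * m /\ c = 0 /\ d = 0) ->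
            w = 0 \/ 0 < w /\ b * m = 1 /\ s = m * m /\ (s = 1 \/ c = 0 /\ d = 0) ->
            w = 0 \/ s = 1 /\ m * m = 1).
  { intros w b m s c d K [|(Hw & _ & Hs & [Hs1'|Hcd])]; [left; auto|right; lra|tauto]. }
  apply Hsat in C1, C2, C3; auto.
  assert (w1 * (1 - s1) = 0) by (destruct C1 as [->|[-> _]]; ring).
  assert (w2 * (1 - s2) = 0) by (destruct C2 as [->|[-> _]]; ring).
  assert (w3 * (1 - s3) = 0) by (destruct C3 as [->|[-> _]]; ring).
  right. rewrite EF1, EF2, EF3.
  replace l1 with (w1 * s1) in * by lra. replace l2 with (w2 * s2) in * by lra.
  replace l3 with (w3 * s3) in * by lra.
  repeat split; apply Rabs_saturated_beam; auto.
Qed.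

Section Ihat.
Variables (R1 R2 R3 : vec3) (w1 w2 w3 : R) (nu1 nu2 nu3 : (R -> Prop) -> R).
Hypotheses (hnu1 : prob_meas_11 nu1) (hnu2 : prob_meas_11 nu2) (hnu3 : prob_meas_11 nu3).

Lemma mom0_Ihat : mom0 (Ihat R1 R2 R3 w1 w2 w3 nu1 nu2 nu3) = w1 + w2 + w3.
Proof. unfold mom0, Ihat. rewrite !axisym_int_one; auto. ring. Qed.

Lemma dot_mom1_Ihat v : dot (mom1 (Ihat R1 R2 R3 w1 w2 w3 nu1 nu2 nu3)) v
  = w1 * mean nu1 * dot R1 v + w2 * mean nu2 * dot R2 v + w3 * mean nu3 * dot R3 v.
Proof. unfold dot, mom1, Ihat. rewrite !axisym_int_coord; auto. ring. Qed.

Lemma quadf_mom2_Ihat v : quadf (mom2 (Ihat R1 R2 R3 w1 w2 w3 nu1 nu2 nu3)) v =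
    w1 * ((dot R1 v ^ 2 - (dot R2 v ^ 2 + dot R3 v ^ 2) / 2) * second_moment nu1
          + (dot R2 v ^ 2 + dot R3 v ^ 2) / 2)
  + w2 * ((dot R2 v ^ 2 - (dot R3 v ^ 2 + dot R1 v ^ 2) / 2) * second_moment nu2
          + (dot R3 v ^ 2 + dot R1 v ^ 2) / 2)
  + w3 * ((dot R3 v ^ 2 - (dot R1 v ^ 2 + dot R2 v ^ 2) / 2) * second_moment nu3
          + (dot R1 v ^ 2 + dot R2 v ^ 2) / 2).
Proof.
  unfold quadf, mom2, Ihat. simpl sum_f_R0. rewrite !axisym_int_coord_mul; auto.
  unfold dot, Rdiv. ring.
Qed.

End Ihat.

Theorem mainTheorem6
  (R1 R2 R3 : vec3) (w1 w2 w3 : R) (nu1 nu2 nu3 : (R -> Prop) -> R)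
  (hR1 : dot R1 R1 = 1) (hR2 : dot R2 R2 = 1) (hR3 : dot R3 R3 = 1)
  (h12 : dot R1 R2 = 0) (h13 : dot R1 R3 = 0) (h23 : dot R2 R3 = 0)
  (hw1 : 0 <= w1) (hw2 : 0 <= w2) (hw3 : 0 <= w3)
  (hnu1 : prob_meas_11 nu1) (hnu2 : prob_meas_11 nu2) (hnu3 : prob_meas_11 nu3) :
  let I := Ihat R1 R2 R3 w1 w2 w3 nu1 nu2 nu3 in
  let E0 := mom0 I in
  let E1 := mom1 I in
  let E2 := mom2 I in
  let l1 := quadf E2 R1 in let l2 := quadf E2 R2 in let l3 := quadf E2 R3 in
  let F1 := dot E1 R1 in let F2 := dot E1 R2 in let F3 := dot E1 R3 in
  0 < l1 -> 0 < l2 -> 0 < l3 ->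
  F1 ^ 2 / l1 + F2 ^ 2 / l2 + F3 ^ 2 / l3 = E0 ->
  ((l1 = F1 ^ 2 / E0 /\ l2 = l3 /\ F2 = 0 /\ F3 = 0) \/
   (l2 = F2 ^ 2 / E0 /\ l1 = l3 /\ F1 = 0 /\ F3 = 0) \/
   (l3 = F3 ^ 2 / E0 /\ l1 = l2 /\ F1 = 0 /\ F2 = 0)) \/
  (Rabs F1 = l1 /\ Rabs F2 = l2 /\ Rabs F3 = l3).
Proof.
  intros I E0 E1 E2 l1 l2 l3 F1 F2 F3.
  assert (dot_sym : forall u v, dot u v = dot v u) by (intros; unfold dot; ring).
  apply (beam_moment_cases w1 w2 w3 (mean nu1) (mean nu2) (mean nu3)
           (second_moment nu1) (second_moment nu2) (second_moment nu3));
    auto using mean_sq_le_second_moment, second_moment_le1;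
    unfold l1, l2, l3, E2, F1, F2, F3, E1, E0, I; rewrite ?mom0_Ihat by auto; rewrite ?quadf_mom2_Ihat, ?dot_mom1_Ihat by auto;
    rewrite ?(dot_sym R2 R1), ?(dot_sym R3 R1), ?(dot_sym R3 R2), ?hR1, ?hR2, ?hR3, ?h12, ?h13, ?h23;
    field.
Qed.
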